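(* Let the true margin $\gamma$ of $\mathcal{D}$ satisfy $\gamma>0$. For any finite dataset $R\subseteq\mathrm{supp}(\mathcal{D})$ with empirical margin $\gamma_R\ge\gamma>0$, $$\mathrm{RS}_{\mathrm{SVM}}(R)\le\sqrt{\frac{1}{\gamma^2}-\frac{1}{\gamma_R^2}}.$$
   Context: Let $k$ be a positive semidefinite kernel on $\mathcal{X}$ with RKHS $(\mathcal{H},\langle\cdot,\cdot\rangle_{\mathcal{H}})$ and feature map $\phi$ with $k(x,x')=\langle\phi(x),\phi(x')\rangle_{\mathcal{H}}$. Let $\mathcal{D}$ be a distribution on $\mathcal{X}\times\{-1,+1\}$. The true margin is $\gamma=\sup_{u\in\mathcal{H},\|u\|_{\mathcal{H}}=1}\inf_{(x,y)\in\mathrm{supp}(\mathcal{D})}y\langle u,\phi(x)\rangle_{\mathcal{H}}$, and the empirical margin $\gamma_R$ of a dataset $R=\{(x_i,y_i)\}_{i=1}^n$ is defined with the infimum over $(x_i,y_i)\in R$ instead. The hard-margin kernel SVM solution is $w_R\in\arg\min_{w\in\mathcal{H}}\frac12\|w\|_{\mathcal{H}}^2$ subject to $y_i\langle w,\phi(x_i)\rangle_{\mathcal{H}}\ge1$ for all $i$. The retain sensitivity is $\mathrm{RS}_{\mathrm{SVM}}(R)=\sup_{(x,y)\in\mathrm{supp}(\mathcal{D})}\|w_R-w_{R\cup\{(x,y)\}}\|_{\mathcal{H}}$. *)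

From HB Require Import structures.
From mathcomp Require Import all_boot all_order all_algebra.
From mathcomp Require Import all_classical all_reals ereal.
From Stdlib Require List.
Set Implicit Arguments. Unset Strict Implicit. Unset Printing Implicit Defensive.
Import Order.TTheory GRing.Theory Num.Theory.
Local Open Scope ring_scope.
Local Open Scope classical_set_scope.

Definition hnorm (R : realType) (V : lmodType R) (ip : V -> V -> R) (v : V) : R :=
  Num.sqrt (ip v v).

Record is_hilbert (R : realType) (V : lmodType R) (ip : V -> V -> R) : Prop := {
  ip_sym : forall u v, ip u v = ip v u;
  ip_linear : forall (a : R) (u v w : V), ip (a *: u + v) w = a * ip u w + ip v w;
  ip_posdef : forall v : V, v != 0 -> 0 < ip v v;
  ip_complete : forall u : nat -> V,
    (forall eps : R, 0 < eps -> exists N : nat, forall m n : nat,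
        (N <= m)%N -> (N <= n)%N -> hnorm ip (u m - u n) < eps) ->
    exists l : V, forall eps : R, 0 < eps -> exists N : nat, forall n : nat,
        (N <= n)%N -> hnorm ip (u n - l) < eps
}.

Definition lab (R : realType) (b : bool) : R := if b then 1 else -1.

Definition margin (R : realType) (V : lmodType R) (ip : V -> V -> R)
  (X : Type) (phi : X -> V) (A : set (X * bool)) : \bar R :=
  ereal_sup [set ereal_inf [set ((lab R z.2 * ip u (phi z.1))%:E) | z in A]
            | u in [set u : V | hnorm ip u = 1]].

Definition dset (X : Type) (D : seq (X * bool)) : set (X * bool) :=
  [set z | List.In z D].

Definition svm_feasible (R : realType) (V : lmodType R) (ip : V -> V -> R)
  (X : Type) (phi : X -> V) (D : seq (X * bool)) (w : V) : Prop :=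
  forall z, List.In z D -> 1 <= lab R z.2 * ip w (phi z.1).

Definition is_svm_solution (R : realType) (V : lmodType R) (ip : V -> V -> R)
  (X : Type) (phi : X -> V) (D : seq (X * bool)) (w : V) : Prop :=
  svm_feasible ip phi D w /\
  forall w' : V, svm_feasible ip phi D w' ->
    1 / 2 * hnorm ip w ^+ 2 <= 1 / 2 * hnorm ip w' ^+ 2.

(* 1/g^2 for an extended real margin, with the convention 1/(+oo)^2 = 0
   (the empirical margin of the empty dataset is +oo). *)
Definition einvsq (R : realType) (g : \bar R) : R :=
  match g with
  | EFin r => r ^-2
  | _ => 0
  end.

(** Write [a] for the SVM solution on [D] and [b] for the one on [z :: D].
    Since [b] is feasible for [D] and the feasible set is convex, [a] is the
    minimum-norm point of a convex set containing [b], which gives the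
    Pythagorean inequality [|a|^2 + |b - a|^2 <= |b|^2].  For every
    [s < gamma] some unit [u] separates [supp] with margin [s], so [u / s] is
    feasible for [z :: D] and [|b| <= 1 / gamma]; dually, [a / |a|] separates
    [D] with margin [1 / |a|], so [1 / gamma_D <= |a|].  Combining the three
    bounds gives [|a - b|^2 <= 1 / gamma^2 - 1 / gamma_D^2]. *)

From HB Require Import structures.
From mathcomp Require Import all_boot all_order all_algebra.
From mathcomp Require Import all_classical all_reals ereal.
From mathcomp Require Import unstable ring lra.
From Stdlib Require List.
Set Implicit Arguments. Unset Strict Implicit. Unset Printing Implicit Defensive.
Import Order.TTheory GRing.Theory Num.Theory.
Local Open Scope ring_scope.
Local Open Scope classical_set_scope.

Lemma lab_sqr (R : realType) (b : bool) : lab R b * lab R b = 1.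
Proof. by case: b; rewrite /lab ?mulrNN mulr1. Qed.

Lemma mulr_le1_from_below (R : realFieldType) (g n : R) :
  0 <= n -> (forall s, 0 < s < g -> s * n <= 1) -> g * n <= 1.
Proof.
move=> n_ge0 hs; apply/ler_ltP => z z_lt.
have [z_le0|z_gt0] := lerP z 0; first exact: le_trans z_le0 ler01.
have n_gt0 : 0 < n.
  rewrite lt_neqAle n_ge0 andbT; apply/eqP => n0.
  by move: z_lt; rewrite -n0 mulr0 => /(lt_trans z_gt0); rewrite ltxx.
rewrite -(divfK (lt0r_neq0 n_gt0) z); apply: hs.
by rewrite divr_gt0 //= ltr_pdivrMr.
Qed.

Section InnerProduct.
Variables (R : realType) (V : lmodType R) (ip : V -> V -> R).
Hypothesis H : is_hilbert ip.

Lemma ipDl u v w : ip (u + v) w = ip u w + ip v w.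
Proof. by rewrite -{1}(scale1r u) ip_linear // mul1r. Qed.

Lemma ip0l v : ip 0 v = 0.
Proof. by have := ipDl 0 0 v; rewrite addr0; lra. Qed.

Lemma ipZl a u w : ip (a *: u) w = a * ip u w.
Proof. by rewrite -(addr0 (a *: u)) ip_linear // ip0l addr0. Qed.

Lemma ipNl u w : ip (- u) w = - ip u w.
Proof. by rewrite -scaleN1r ipZl mulN1r. Qed.

Lemma ipBl u v w : ip (u - v) w = ip u w - ip v w.
Proof. by rewrite ipDl ipNl. Qed.

Lemma ipDr u v w : ip w (u + v) = ip w u + ip w v.
Proof. by rewrite !(ip_sym H w) ipDl. Qed.

Lemma ipZr a u w : ip w (a *: u) = a * ip w u.
Proof. by rewrite !(ip_sym H w) ipZl. Qed.

Lemma ipBr u v w : ip w (u - v) = ip w u - ip w v.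
Proof. by rewrite !(ip_sym H w) ipBl. Qed.

Lemma ip_ge0 v : 0 <= ip v v.
Proof.
have [->|v_neq0] := eqVneq v 0; first by rewrite ip0l.
exact/ltW/ip_posdef.
Qed.

Lemma hnorm_sqr v : hnorm ip v ^+ 2 = ip v v.
Proof. by rewrite sqr_sqrtr // ip_ge0. Qed.

Lemma hnormZ a v : hnorm ip (a *: v) = `|a| * hnorm ip v.
Proof. by rewrite /hnorm ipZl ipZr mulrA -expr2 sqrtrM ?sqr_ge0 // sqrtr_sqr. Qed.

Lemma hnormN v : hnorm ip (- v) = hnorm ip v.
Proof. by rewrite -scaleN1r hnormZ normrN normr1 mul1r. Qed.

Lemma ip_unit_le u p (e : R) :
  ip u u = 1 -> e * e = 1 -> e * ip u p <= (1 + ip p p) / 2.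
Proof.
move=> uu ee; have := ip_ge0 (u - e *: p).
rewrite !ipBl !ipBr !ipZl !ipZr (ip_sym H p u) uu mulrA ee mul1r.
lra.
Qed.

(* If [c := <a, b - a>] were negative, the point of the segment at parameter
   [t := - c / (|b - a|^2 - c)] would have a smaller norm than [a]. *)
Lemma min_norm_pythagoras_le (C : set V) a b :
  (forall w, C w -> ip a a <= ip w w) ->
  (forall t, 0 <= t <= 1 -> C (a + t *: (b - a))) ->
  ip a a + ip (b - a) (b - a) <= ip b b.
Proof.
move=> a_min segC; set c := ip a (b - a); set d := ip (b - a) (b - a).
have expand t : ip (a + t *: (b - a)) (a + t *: (b - a))
                = ip a a + 2 * t * c + t ^+ 2 * d.
  by rewrite ipDl !ipDr !ipZl !ipZr (ip_sym H (b - a) a) -/c -/d; ring.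
have b_eq : ip b b = ip a a + 2 * c + d.
  by have := expand 1; rewrite scale1r addrC subrK => ->; ring.
have d_ge0 : 0 <= d by exact: ip_ge0.
have descent t : 0 < t <= 1 -> 0 <= 2 * c + t * d.
  move=> /andP[t_gt0 t_le1].
  have /a_min : C (a + t *: (b - a)) by apply: segC; rewrite ltW.
  rewrite expand -(pmulr_rge0 _ t_gt0) => le_seg.
  have -> : t * (2 * c + t * d) = 2 * t * c + t ^+ 2 * d by ring.
  lra.
suff c_ge0 : 0 <= c by rewrite b_eq; lra.
rewrite leNgt; apply/negP => c_lt0.
have dc_gt0 : 0 < d - c by lra.
set t := - c / (d - c).
have t_gt0 : 0 < t by rewrite divr_gt0 // oppr_gt0.
have td : t * (d - c) = - c by rewrite divfK // gt_eqF.
have t_le1 : t <= 1 by rewrite ler_pdivrMr // mul1r; lra.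
have /descent : 0 < t <= 1 by rewrite t_gt0 t_le1.
have -> : 2 * c + t * d = c * (1 + t) by rewrite -[t * d](subrK (t * c)) -mulrBr td; ring.
by rewrite pmulr_lge0; lra.
Qed.

End InnerProduct.

Section Margin.
Variables (R : realType) (V : lmodType R) (ip : V -> V -> R).
Hypothesis H : is_hilbert ip.
Variables (X : Type) (phi : X -> V).

Lemma margin_ge (A : set (X * bool)) u (m : \bar R) :
  hnorm ip u = 1 -> (forall z, A z -> (m <= (lab R z.2 * ip u (phi z.1))%:E)%E) ->
  (m <= margin ip phi A)%E.
Proof.
move=> u1 le_m; apply: le_trans (ereal_sup_ubound _); last by exists u.
by apply: le_ereal_inf_tmp => _ [z Az <-]; exact: le_m.
Qed.

Lemma lt_margin_unit (A : set (X * bool)) (s : R) :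
  (s%:E < margin ip phi A)%E ->
  exists2 u, hnorm ip u = 1 & forall z, A z -> s < lab R z.2 * ip u (phi z.1).
Proof.
move=> /ereal_sup_gt[_ [u u1 <-] lt_s]; exists u => // z Az.
by rewrite -lte_fin; apply: lt_le_trans lt_s _; apply: ereal_inf_lbound; exists z.
Qed.

Lemma margin_lt_pinfty (A : set (X * bool)) z : A z -> (margin ip phi A < +oo)%E.
Proof.
move=> Az; apply: (@le_lt_trans _ _ ((1 + ip (phi z.1) (phi z.1)) / 2)%:E); last exact: ltry.
apply: ge_ereal_sup => _ [u u1 <-].
apply: le_trans (ereal_inf_lbound _) _; first by exists z.
rewrite lee_fin; apply: ip_unit_le => //; last exact: lab_sqr.
by rewrite -hnorm_sqr // u1 expr1n.
Qed.

(* The margin of the empty dataset is [+oo], or [-oo] when [V] has no unit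
   vector; either way [einvsq] sends it to [0]. *)
Lemma margin_nil_not_fin : margin ip phi (dset [::]) \isn't a fin_num.
Proof.
have [[u u1]|no_unit] := pselect (exists u, hnorm ip u = 1).
  suff -> : margin ip phi (dset [::]) = +oo%E by [].
  by apply/eqP; rewrite eq_le leey; apply: (margin_ge u1) => z [].
rewrite /margin (_ : [set u | hnorm ip u = 1] = set0) ?image_set0 ?ereal_sup0 //.
by apply/seteqP; split => // u /= u1; apply: no_unit; exists u.
Qed.

End Margin.

Section SVM.
Variables (R : realType) (V : lmodType R) (ip : V -> V -> R).
Hypothesis H : is_hilbert ip.
Variables (X : Type) (phi : X -> V).

Lemma svm_feasible_segment D a b t :
  svm_feasible ip phi D a -> svm_feasible ip phi D b -> 0 <= t <= 1 ->
  svm_feasible ip phi D (a + t *: (b - a)).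
Proof.
move=> feas_a feas_b /andP[t_ge0 t_le1] z Dz.
have := feas_a z Dz; have := feas_b z Dz.
rewrite ipDl // ipZl // ipBl //.
set l := lab R z.2; set pa := ip a (phi z.1); set pb := ip b (phi z.1).
have -> : l * (pa + t * (pb - pa)) = (1 - t) * (l * pa) + t * (l * pb) by ring.
move=> le_b le_a.
rewrite -[leLHS](_ : (1 - t) * 1 + t * 1 = 1); last by ring.
by rewrite lerD // ler_wpM2l // subr_ge0.
Qed.

Lemma svm_solution_min D w w' :
  is_svm_solution ip phi D w -> svm_feasible ip phi D w' -> ip w w <= ip w' w'.
Proof.
by move=> [_ w_min] /w_min; rewrite !hnorm_sqr // ler_pM2l ?divr_gt0.
Qed.

Lemma einvsq_margin_le D w :
  svm_feasible ip phi D w -> einvsq (margin ip phi (dset D)) <= ip w w.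
Proof.
move=> feas; have [w0|w_neq0] := eqVneq w 0.
  rewrite w0 ip0l //; case: D feas => [_|z D].
    by case: (margin ip phi (dset [::])) (margin_nil_not_fin ip phi).
  by move=> /(_ z (or_introl erefl)); rewrite w0 ip0l // mulr0 ler10.
set n := hnorm ip w.
have n_gt0 : 0 < n by rewrite sqrtr_gt0 ip_posdef.
have : ((n^-1)%:E <= margin ip phi (dset D))%E.
  apply: (margin_ge (u := n^-1 *: w)).
    by rewrite hnormZ // -/n gtr0_norm ?invr_gt0 // mulVf ?gt_eqF.
  move=> z Dz; rewrite lee_fin ipZl // mulrCA ler_pMr ?invr_gt0 //.
  exact: feas.
case: (margin ip phi (dset D)) => [r| |] //= n_le; last exact: ip_ge0.
rewrite lee_fin in n_le; have r_gt0 : 0 < r by apply: lt_le_trans n_le; rewrite invr_gt0.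
rewrite -hnorm_sqr // -/n -exprVn.
rewrite ler_pXn2r ?nnegrE ?invr_ge0 ?(ltW r_gt0) ?(ltW n_gt0) //.
by rewrite invf_ple ?posrE.
Qed.

Lemma svm_solution_sqr_le_margin (A : set (X * bool)) D g w :
  0 < g -> margin ip phi A = g%:E -> (forall z, List.In z D -> A z) ->
  is_svm_solution ip phi D w -> ip w w <= g ^-2.
Proof.
move=> g_gt0 Eg DA sol.
have below s : 0 < s < g -> s * hnorm ip w <= 1.
  move=> /andP[s_gt0 s_lt_g].
  have /lt_margin_unit[u u1 sep] : (s%:E < margin ip phi A)%E by rewrite Eg lte_fin.
  have feas : svm_feasible ip phi D (s^-1 *: u).
    move=> z Dz; rewrite ipZl // mulrCA mulrC ler_pdivlMr // mul1r.
    exact/ltW/sep/DA.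
  have := ler_wsqrtr (svm_solution_min sol feas).
  rewrite -/(hnorm ip w) -/(hnorm ip (s^-1 *: u)) hnormZ // u1 mulr1.
  by rewrite gtr0_norm ?invr_gt0 // -(mulfV (lt0r_neq0 s_gt0)) ler_pM2l.
have gn_le1 := mulr_le1_from_below (sqrtr_ge0 _) below.
have n_le : hnorm ip w <= g^-1 by rewrite -[g^-1]mulr1 ler_pdivlMl.
by rewrite -hnorm_sqr // -exprVn ler_pXn2r ?nnegrE ?invr_ge0 ?sqrtr_ge0 ?(ltW g_gt0).
Qed.

End SVM.

Theorem mainTheorem10 (R : realType) (V : lmodType R) (ip : V -> V -> R)
  (X : Type) (phi : X -> V) (supp : set (X * bool)) :
  is_hilbert ip ->
  (0 < margin ip phi supp)%E ->
  forall D : seq (X * bool),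
    (forall z, List.In z D -> supp z) ->
    (margin ip phi supp <= margin ip phi (dset D))%E ->
    forall wD : V, is_svm_solution ip phi D wD ->
    forall z : X * bool, supp z ->
    forall wDz : V, is_svm_solution ip phi (z :: D) wDz ->
      hnorm ip (wD - wDz) <=
        Num.sqrt (einvsq (margin ip phi supp) - einvsq (margin ip phi (dset D))).
Proof.
move=> H g_gt0 D Dsupp _ wD solD z supp_z wDz solDz.
have := margin_lt_pinfty H phi supp_z.
case Eg: (margin ip phi supp) g_gt0 => [g| |] //= g_gt0 _.
rewrite lte_fin in g_gt0.
have zD_supp y : List.In y (z :: D) -> supp y by case=> [<-|/Dsupp].
have le_wDz := svm_solution_sqr_le_margin H g_gt0 Eg zD_supp solDz.
have feasD_wDz : svm_feasible ip phi D wDz.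
  by move=> y Dy; apply: solDz.1; right.
have le_wD := einvsq_margin_le H solD.1.
have pyth := min_norm_pythagoras_le H (fun w => svm_solution_min H solD (w' := w))
  (fun t => svm_feasible_segment H solD.1 feasD_wDz).
by rewrite -opprB hnormN //; apply: ler_wsqrtr; lra.
Qed.
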